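(* The set $\mathcal W$ of $n\times n$ matrices is closed under matrix multiplication: if $P,Q\in\mathcal W$ then $PQ\in\mathcal W$.
   Context: Let $\mathcal N=\{1,\ldots,n\}$. A matrix is stochastic if it is entrywise nonnegative with row sums $1$. For stochastic $P$ and $\mathcal A\subseteq\mathcal N$, $F_P(\mathcal A)=\{j:\ p_{ij}>0\text{ for some } i\in\mathcal A\}$. $\mathcal W$ is the set of stochastic $n\times n$ matrices $P$ such that for any disjoint nonempty $\mathcal A,\tilde{\mathcal A}\subseteq\mathcal N$, either $F_P(\mathcal A)\cap F_P(\tilde{\mathcal A})\neq\emptyset$, or $F_P(\mathcal A)\cap F_P(\tilde{\mathcal A})=\emptyset$ and $|F_P(\mathcal A)\cup F_P(\tilde{\mathcal A})|\ge|\mathcal A\cup\tilde{\mathcal A}|$. *)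

(* Matrices with entries in an arbitrary real (ordered) field R;
   the paper's real matrices are the instance R = reals. *)
From HB Require Import structures.
From mathcomp Require Import all_boot all_order all_algebra.
Set Implicit Arguments. Unset Strict Implicit. Unset Printing Implicit Defensive.
Import Order.TTheory GRing.Theory Num.Theory.
Local Open Scope ring_scope.

Definition stochastic (R : realFieldType) (n : nat) (P : 'M[R]_n) : Prop :=
  (forall i j, 0 <= P i j) /\ (forall i, \sum_(j < n) P i j = 1).

Definition F_P (R : realFieldType) (n : nat) (P : 'M[R]_n) (A : {set 'I_n})
  : {set 'I_n} := [set j | [exists i in A, 0 < P i j]].

Definition in_W (R : realFieldType) (n : nat) (P : 'M[R]_n) : Prop :=
  stochastic P /\
  forall A A' : {set 'I_n},
    A != set0 -> A' != set0 -> [disjoint A & A'] ->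
    (F_P P A :&: F_P P A' != set0) \/
    (F_P P A :&: F_P P A' = set0 /\
     (#|A :|: A'| <= #|F_P P A :|: F_P P A'|)%N).

(* The support map A |-> F_P(A) of a product is the composite of the support
   maps: F_{PQ}(A) = F_Q(F_P(A)), because all entries are nonnegative and a
   sum of nonnegative terms is positive iff one term is.  If the supports of A
   and A' under PQ are disjoint, then so are B = F_P(A) and B' = F_P(A')
   (a common point of B and B' would have a nonempty, hence common, image
   under F_Q), so the condition for P and then for Q gives
   #|A u A'| <= #|B u B'| <= #|F_Q(B) u F_Q(B')|. *)
From HB Require Import structures.
From mathcomp Require Import all_boot all_order all_algebra.
Import Order.TTheory GRing.Theory Num.Theory.
Local Open Scope ring_scope.

Section Support.
Context {R : realFieldType} {n : nat}.
Implicit Types (P Q : 'M[R]_n) (A B : {set 'I_n}).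

Lemma stochastic_mulmx P Q : stochastic P -> stochastic Q -> stochastic (P *m Q).
Proof.
move=> [P0 P1] [Q0 Q1]; split=> [i j|i].
  by rewrite mxE; apply: sumr_ge0 => k _; apply: mulr_ge0.
under eq_bigr => j _ do rewrite mxE.
rewrite exchange_big /= -(P1 i); apply: eq_bigr => k _.
by rewrite -mulr_sumr Q1 mulr1.
Qed.

Lemma stochastic_row_gt0 {P} : stochastic P -> forall i, exists j, 0 < P i j.
Proof.
move=> [P0 P1] i; apply/existsP; apply: contraT => /existsPn Pi_le0.
have : \sum_(j < n) P i j = 0.
  by apply: big1 => j _; apply/eqP; rewrite eq_le P0 andbT leNgt Pi_le0.
by rewrite P1 => /eqP; rewrite oner_eq0.
Qed.

Lemma F_P_neq0 {P A} : stochastic P -> A != set0 -> F_P P A != set0.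
Proof.
move=> sP /set0Pn [i iA]; have [j Pij] := stochastic_row_gt0 sP i.
by apply/set0Pn; exists j; rewrite inE; apply/existsP; exists i; rewrite iA.
Qed.

Lemma F_P_subset P A B : A \subset B -> F_P P A \subset F_P P B.
Proof.
move=> /subsetP sAB; apply/subsetP => j; rewrite !inE => /existsP [i /andP [iA Pij]].
by apply/existsP; exists i; rewrite sAB.
Qed.

Lemma F_PI_subset P A B : F_P P (A :&: B) \subset F_P P A :&: F_P P B.
Proof. by rewrite subsetI !F_P_subset ?subsetIl ?subsetIr. Qed.

Lemma F_P_mulmx P Q A : (forall i j, 0 <= P i j) -> (forall i j, 0 <= Q i j) ->
  F_P (P *m Q) A = F_P Q (F_P P A).
Proof.
move=> P0 Q0; apply/setP => j; rewrite !inE; apply/existsP/existsP.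
- move=> [i /andP [iA]]; rewrite mxE => PQij_gt0.
  have [k PQk_gt0] : exists k, 0 < P i k * Q k j.
    apply/existsP; apply: contraT => /existsPn PQ_le0.
    suff : \sum_(k < n) P i k * Q k j <= 0 by rewrite leNgt PQij_gt0.
    by apply: sumr_le0 => k _; rewrite leNgt PQ_le0.
  have Pik_gt0 : 0 < P i k.
    by rewrite lt_def P0 andbT; apply: contraTneq PQk_gt0 => ->; rewrite mul0r ltxx.
  have Qkj_gt0 : 0 < Q k j.
    by rewrite lt_def Q0 andbT; apply: contraTneq PQk_gt0 => ->; rewrite mulr0 ltxx.
  by exists k; rewrite inE Qkj_gt0 andbT; apply/existsP; exists i; rewrite iA.
- move=> [k /andP []]; rewrite inE => /existsP [i /andP [iA Pik]] Qkj.
  exists i; rewrite iA /= mxE (bigD1 k) //=.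
  apply: ltr_wpDr; first by apply: sumr_ge0 => l _; apply: mulr_ge0.
  exact: mulr_gt0.
Qed.

End Support.

Theorem mainTheorem7 (R : realFieldType) (n : nat) (P Q : 'M[R]_n) :
  in_W P -> in_W Q -> in_W (P *m Q).
Proof.
move=> [sP WP] [sQ WQ]; split; first exact: stochastic_mulmx.
move=> A A' A0 A'0 dAA'; rewrite !(F_P_mulmx _ _ _ sP.1 sQ.1).
set B := F_P P A; set B' := F_P P A'.
have [FQ_dis|] := eqVneq (F_P Q B :&: F_P Q B') set0; last by left.
right; split => //.
have [BB'|[BB' le_AB]] := WP A A' A0 A'0 dAA'.
  have /set0Pn [j FQj] := F_P_neq0 sQ BB'.
  suff : j \in (set0 : {set 'I_n}) by rewrite inE.
  by rewrite -FQ_dis; apply: subsetP (F_PI_subset _ _ _) _ FQj.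
have dBB' : [disjoint B & B'] by rewrite -setI_eq0 BB'.
have [|[_ le_BFQ]] := WQ B B' (F_P_neq0 sP A0) (F_P_neq0 sP A'0) dBB'.
  by rewrite FQ_dis eqxx.
exact: leq_trans le_AB le_BFQ.
Qed.
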